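(* No randomized (adaptive) priority algorithm for one-sided bipartite matching can achieve an approximation ratio better than $\frac{53}{54}$.
   Context: One-sided bipartite matching: the offline side's vertex names are known in advance; each online vertex corresponds to a data item consisting of its name together with its set of offline neighbours; when a data item is received the algorithm must irrevocably match that online vertex to an unmatched neighbour or leave it unmatched; the goal is a maximum-size matching. Adaptive priority model: before each step the algorithm specifies a total ordering $\pi$ of the universe of all possible data items (which may depend on previously received data items and decisions), and receives the remaining data item of the instance that comes first in $\pi$, then decides. A randomized priority algorithm may in addition use random bits in its orderings and decisions; its approximation ratio is $\inf_I \mathbb{E}[v(\mathbb{A},I)]/v(I)$, with $v(I)$ the maximum matching size. *)

From HB Require Import structures.
From mathcomp Require Import all_boot all_order all_algebra finmap.
From mathcomp Require Import all_classical all_reals all_analysis.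
Set Implicit Arguments. Unset Strict Implicit. Unset Printing Implicit Defensive.

(* A data item = (online name, set of offline neighbours).             *)

Definition item : Type := (nat * {fset nat})%type.

Record instance : Type := Instance {
  offline : {fset nat};
  items : seq item }.

Definition valid_instance (I : instance) : Prop :=
  uniq (map fst (items I)) /\
  (forall x, x \in items I -> (x.2 `<=` offline I)%fset).

(* A matching of I: list of (online name, offline vertex) pairs that are
   edges, using each online and each offline vertex at most once. *)
Definition is_matching (I : instance) (m : seq (nat * nat)) : Prop :=
  uniq (map fst m) /\ uniq (map snd m) /\
  (forall p, p \in m -> exists2 x, x \in items I & x.1 = p.1 /\ p.2 \in x.2).

Definition max_matching_size (I : instance) (k : nat) : Prop :=
  (exists m, is_matching I m /\ size m = k) /\
  (forall m, is_matching I m -> size m <= k)%N.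

(* History: received data items with the (effective) decisions taken;
   None = left unmatched, Some u = matched to offline vertex u. *)
Definition history : Type := seq (item * option nat).

Definition total_order_on (T : Type) (le : rel T) : Prop :=
  reflexive le /\ antisymmetric le /\ transitive le /\ total le.

(* A deterministic adaptive priority algorithm: given the offline side and
   the history so far, it specifies a total order of the universe of all
   possible data items, and a decision for the received data item. *)
Record det_alg : Type := DetAlg {
  order_of : {fset nat} -> history -> rel item;
  decide : {fset nat} -> history -> item -> option nat }.

Definition det_alg_valid (A : det_alg) : Prop :=
  forall V h, total_order_on (order_of A V h).

Definition first_in (le : rel item) (s : seq item) : option item :=
  foldr (fun x acc => match acc with
                      | None => Some x
                      | Some y => if le x y then Some x else Some y
                      end) None s.

Definition matched_offline (h : history) : seq nat :=
  pmap snd h.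

Definition effective (h : history) (x : item) (d : option nat) : option nat :=
  match d with
  | Some u => if (u \in x.2) && (u \notin matched_offline h) then Some u else None
  | None => None
  end.

Fixpoint run_aux (A : det_alg) (V : {fset nat}) (fuel : nat)
    (rest : seq item) (h : history) : history :=
  match fuel with
  | 0 => h
  | fuel'.+1 =>
    match first_in (order_of A V h) rest with
    | None => h
    | Some x =>
      let d := effective h x (decide A V h x) in
      run_aux A V fuel' (rem x rest) (rcons h (x, d))
    end
  end.

Definition alg_value (A : det_alg) (I : instance) : nat :=
  size (matched_offline
          (run_aux A (offline I) (size (items I)) (items I) [::])).

From HB Require Import structures.
From mathcomp Require Import all_boot all_order all_algebra finmap.
From mathcomp Require Import all_classical all_reals all_analysis.
From mathcomp Require Import measurable_realfun zify lra.
Import Order.TTheory GRing.Theory Num.Theory.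

Set Implicit Arguments. Unset Strict Implicit. Unset Printing Implicit Defensive.

(* Yao's principle on twelve instances.  Take offline vertices 0, 1, 2 and,
   for each j, two online twins of j adjacent to every offline vertex but j.
   Instance (j, c, p), p <> j, consists of twin c of j and both twins of p;
   it has a perfect matching of size 3.  Since the twelve instances share the
   offline side, a deterministic algorithm starts with the same order and the
   same decisions in all of them: the twin (j, c) it ranks first among all six
   is received first, and matched the same way, in every instance containing
   it.  For one of the two p <> j that decision does not take p, and as p is
   not adjacent to its own twins, p stays unmatched in instance (j, c, p).
   So the twelve values sum to at most 35, and for a randomized algorithm some
   instance has expected value at most 35/12 = (35/36) * 3 < (53/54) * 3. *)

Section FirstIn.
Variable le : rel item.

Lemma first_in_mem s y : first_in le s = Some y -> y \in s.
Proof.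
elim: s y => //= x s IH y.
case E: (first_in le s) => [z|]; last by move=> [<-]; rewrite mem_head.
by case: ifP => _ [<-]; rewrite inE ?eqxx ?(IH _ E) ?orbT.
Qed.

Lemma first_in_None s : first_in le s = None -> s = [::].
Proof. by case: s => //= x s; case: (first_in le s) => // z; case: ifP. Qed.

Hypothesis le_order : total_order_on le.

Lemma first_in_le s y z : first_in le s = Some y -> z \in s -> le y z.
Proof.
have [refl [_ [trans tot]]] := le_order.
elim: s y => //= x s IH y.
case E: (first_in le s) => [w|]; last first.
  by move=> [<-]; rewrite inE (first_in_None E) orbF => /eqP->.
case: ifP => le_xw [<-]; rewrite inE => /orP[/eqP->|zs].
- exact: refl.
- exact: trans le_xw (IH _ E zs).
- by case/orP: (tot x w) => //; rewrite le_xw.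
- exact: IH.
Qed.

Lemma first_in_subset s t y :
  first_in le s = Some y -> y \in t -> {subset t <= s} -> first_in le t = Some y.
Proof.
move=> first_y yt ts; case E: (first_in le t) => [z|]; last first.
  by rewrite (first_in_None E) in yt.
have [_ [anti _]] := le_order.
have z_s := ts _ (first_in_mem E).
by congr Some; apply: anti; rewrite (first_in_le E yt) (first_in_le first_y z_s).
Qed.

End FirstIn.

Lemma effective_Some h x d u :
  effective h x d = Some u -> u \in x.2 /\ u \notin matched_offline h.
Proof. by case: d => //= v; case: ifP => // /andP[? ?] [<-]. Qed.

Lemma mem_matched_run A V n rest h u :
  u \in matched_offline (run_aux A V n rest h) ->
  u \in matched_offline h \/ exists2 x, x \in rest & u \in x.2.
Proof.
elim: n rest h => [|n IH] rest h /=; first by left.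
case first_x: (first_in _ rest) => [x|]; last by left.
move=> /IH [|[y /mem_rem y_rest u_y]]; last by right; exists y.
rewrite /matched_offline -cats1 pmap_cat mem_cat => /orP[]; first by left.
case E: (effective h x _) => [v|] //=; rewrite inE => /eqP->.
by right; exists x; [exact: first_in_mem first_x | case: (effective_Some E)].
Qed.

Lemma uniq_matched_run A V n rest h :
  uniq (matched_offline h) -> uniq (matched_offline (run_aux A V n rest h)).
Proof.
elim: n rest h => [|n IH] rest h //= uniq_h.
case: (first_in _ rest) => [x|] //; apply: IH.
rewrite /matched_offline -cats1 pmap_cat /=.
case E: (effective h x _) => [v|] /=; last by rewrite cats0.
by rewrite cats1 rcons_uniq uniq_h andbT; case: (effective_Some E).
Qed.

Local Open Scope fset_scope.

Lemma alg_value_le_offline A I : valid_instance I -> alg_value A I <= #|` offline I|.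
Proof.
move=> [_ nbrs]; apply: uniq_leq_size; first exact: uniq_matched_run.
by move=> u /mem_matched_run [//|[x /nbrs/fsubsetP]]; apply.
Qed.

Lemma alg_value_lt_offline A I x p :
  valid_instance I -> p \in offline I ->
  first_in (order_of A (offline I) [::]) (items I) = Some x ->
  effective [::] x (decide A (offline I) [::] x) != Some p ->
  (forall y, y \in rem x (items I) -> p \notin y.2) ->
  alg_value A I < #|` offline I|.
Proof.
move=> [_ nbrs] p_off first_x miss_p far_p.
have fuel : size (items I) = (size (rem x (items I))).+1.
  by rewrite (perm_size (perm_to_rem (first_in_mem first_x))).
rewrite (cardfsD1 p) p_off add1n ltnS /alg_value fuel /= first_x.
apply: uniq_leq_size; first by apply: uniq_matched_run; case: effective.
move=> u /mem_matched_run [|[y y_rest u_y]].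
  rewrite /matched_offline /=; case E: effective miss_p => [v|] //= v_p.
  rewrite inE => /eqP->; have [v_x _] := effective_Some E.
  rewrite in_fsetD1 (fsubsetP (nbrs x (first_in_mem first_x))) // andbT.
  by apply: contra_neq v_p => ->.
rewrite in_fsetD1 (fsubsetP (nbrs y (mem_rem y_rest))) // andbT.
by apply: contraNneq (far_p y y_rest) => <-.
Qed.

Lemma matching_size_le_offline I m :
  valid_instance I -> is_matching I m -> size m <= #|` offline I|.
Proof.
move=> [_ nbrs] [_ [uniq_snd edges]]; rewrite -(size_map snd).
apply: uniq_leq_size => // u /mapP [e /edges [x /nbrs/fsubsetP x_off [_ e_x]] ->].
exact: x_off.
Qed.

Lemma sum_lt_mul_size (I : eqType) (s : seq I) (F : I -> nat) b :
  {in s, forall i, F i <= b} -> (exists2 i, i \in s & F i < b) ->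
  \sum_(i <- s) F i < b * size s.
Proof.
move=> le_b [i si lt_b]; have s_i := perm_to_rem si.
rewrite (perm_big _ s_i) (perm_size s_i) big_cons mulnS -addSn leq_add //.
have -> : b * size (rem i s) = \sum_(j <- rem i s) b.
  by rewrite big_const_seq count_predT iter_addn_0.
by rewrite big_seq [leqRHS]big_seq; apply: leq_sum => j /mem_rem /le_b.
Qed.

Definition offline3 : {fset nat} := [fset u in iota 0 3].

Definition others (j : nat) : {fset nat} := offline3 `\ j.

Definition twin (j c : nat) : item := ((2 * j + c)%N, others j).

Definition all_twins : seq item := [seq twin j c | j <- iota 0 3, c <- iota 0 2].

Definition hard_instance (t : nat * nat * nat) : instance :=
  let: (j, c, p) := t in Instance offline3 [:: twin j c; twin p 0; twin p 1].

Definition hard_triples : seq (nat * nat * nat) :=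
  [:: (0,0,1); (0,0,2); (0,1,1); (0,1,2);
      (1,0,0); (1,0,2); (1,1,0); (1,1,2);
      (2,0,0); (2,0,1); (2,1,0); (2,1,1)]%N.

Lemma in_offline3 u : (u \in offline3) = (u < 3)%N.
Proof. by rewrite !inE; case: u => [|[|[|]]]. Qed.

Lemma card_offline3 : #|` offline3| = 3%N.
Proof. by rewrite card_fseq. Qed.

Lemma in_others j u : (u \in others j) = (u != j) && (u < 3)%N.
Proof. by rewrite in_fsetD1 in_offline3. Qed.

Lemma mem_hard_triples j c p :
  ((j, c, p) \in hard_triples) = [&& j < 3, c < 2, p < 3 & p != j]%N.
Proof. by case: j => [|[|[|j]]]; case: c => [|[|c]]; case: p => [|[|[|p]]]. Qed.

Lemma valid_hard_instance j c p :
  (j, c, p) \in hard_triples -> valid_instance (hard_instance (j, c, p)).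
Proof.
rewrite mem_hard_triples => /and4P[j3 c2 p3 p_j]; split.
  by rewrite /= !inE; lia.
by move=> x; rewrite !inE => /or3P[] /eqP->; apply: fsubD1set.
Qed.

Lemma max_matching_hard_instance j c p :
  (j, c, p) \in hard_triples -> max_matching_size (hard_instance (j, c, p)) 3.
Proof.
move=> jcp; split; last first.
  by move=> m /(matching_size_le_offline (valid_hard_instance jcp)); rewrite card_offline3.
move: jcp; rewrite mem_hard_triples => /and4P[j3 c2 p3 p_j].
exists [:: ((2 * j + c)%N, p); ((2 * p)%N, (3 - j - p)%N); ((2 * p + 1)%N, j)].
split=> //; split; first by rewrite /= !inE; lia.
split; first by rewrite /= !inE; lia.
move=> e; rewrite !inE => /or3P[] /eqP-> /=.
- exists (twin j c); first exact: mem_head.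
  by split; rewrite // in_others; lia.
- exists (twin p 0); first by rewrite !in_cons eqxx orbT.
  by split; rewrite /= ?addn0 // in_others; lia.
- exists (twin p 1); first by rewrite !in_cons eqxx !orbT.
  by split; rewrite // in_others; lia.
Qed.

Lemma exists_avoided_vertex j (d : option nat) :
  (j < 3)%N -> exists p, [/\ p < 3, p != j & d != Some p]%N.
Proof.
case: j => [|[|[|]]] // _; case: d => [[|[|[|v]]]|];
  solve [exists 0%N; split => // | exists 1%N; split => // | exists 2%N; split => //].
Qed.

Lemma exists_hard_instance_lt A : det_alg_valid A ->
  exists2 t, t \in hard_triples & (alg_value A (hard_instance t) < 3)%N.
Proof.
move=> A_ok; have le_order := A_ok offline3 [::].
set le := order_of A offline3 [::].
have [e first_e] : exists e, first_in le all_twins = Some e.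
  by case E: (first_in le all_twins) => [e|]; [exists e | have := first_in_None E].
have /allpairsP [[j c] [j3 c2 /= e_jc]] := first_in_mem first_e.
rewrite {}e_jc in first_e; move: j3 c2; rewrite !mem_iota /= => j3 c2.
set first_decision := effective [::] (twin j c) (decide A offline3 [::] (twin j c)).
have [p [p3 p_j miss_p]] := exists_avoided_vertex first_decision j3.
have jcp : (j, c, p) \in hard_triples by rewrite mem_hard_triples j3 c2 p3 p_j.
exists (j, c, p) => //; rewrite -card_offline3.
apply: (alg_value_lt_offline (x := twin j c) (p := p)) => //.
- exact: valid_hard_instance.
- by rewrite in_offline3.
- apply: first_in_subset first_e _ _ => //=; first exact: mem_head.
  by move=> y; rewrite mem_seq3 => /or3P[] /eqP->; apply/allpairsP;
    [exists (j, c) | exists (p, 0%N) | exists (p, 1%N)]; rewrite !mem_iota.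
- by move=> y; rewrite /= eqxx !inE => /orP[] /eqP->; rewrite in_others eqxx.
Qed.

Lemma sum_hard_values_lt A : det_alg_valid A ->
  (\sum_(t <- hard_triples) alg_value A (hard_instance t) < 3 * size hard_triples)%N.
Proof.
move=> A_ok; apply: sum_lt_mul_size; last exact: exists_hard_instance_lt.
move=> [[j c] p] jcp; rewrite -card_offline3.
exact: alg_value_le_offline (valid_hard_instance jcp).
Qed.

Local Close Scope fset_scope.

Section Averaging.
Context (R : realType) (d : measure_display) (Omega : measurableType d).
Variable P : probability Omega R.
Local Open Scope ereal_scope.

Lemma exists_integral_lt (I : eqType) (s : seq I) (f : I -> Omega -> R) (B c : R) :
  {in s, forall i, measurable_fun setT (f i)} ->
  (forall i w, (0 <= f i w)%R) ->
  (forall w, (\sum_(i <- s) f i w <= B)%R) ->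
  (B < (size s)%:R * c)%R ->
  exists2 i, i \in s & \int[P]_w (f i w)%:E < c%:E.
Proof.
move=> mf f0 sumB Bc.
have [//|none] := pselect (exists2 i, i \in s & \int[P]_w (f i w)%:E < c%:E).
have c_le i : i \in s -> c%:E <= \int[P]_w (f i w)%:E.
  by move=> si; rewrite leNgt; apply/negP => lt_c; apply: none; exists i.
(* [ge0_integral_sum] wants every summand measurable, not only those in [s]. *)
pose g i w := if i \in s then (f i w)%:E else 0.
have mg i : measurable_fun [set: Omega] (g i).
  rewrite /g; case si: (i \in s); last exact: measurable_cst.
  exact/measurable_EFinP/mf.
have g0 i w : setT w -> 0 <= g i w by rewrite /g; case: ifP => // _; rewrite lee_fin.
have sum_g w : \sum_(i <- s) g i w = (\sum_(i <- s) f i w)%:E.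
  by rewrite -sumEFin; apply: eq_big_seq => i si; rewrite /g si.
have : ((size s)%:R * c)%:E <= B%:E.
  have -> : ((size s)%:R * c)%:E = \sum_(i <- s) c%:E.
    by rewrite sumEFin big_const_seq count_predT iter_addr_0 mulr_natl.
  apply: le_trans (_ : _ <= \int[P]_w (\sum_(i <- s) g i w)) _.
    rewrite ge0_integral_sum // big_seq [leRHS]big_seq; apply: lee_sum => i si.
    by rewrite /g si; exact: c_le.
  apply: le_trans (_ : _ <= \int[P]_w (cst B%:E) w) _.
    apply: ge0_le_integral => //.
    - by move=> w _; apply: sume_ge0 => i _; exact: g0.
    - exact: emeasurable_sum.
    - by move=> w _; rewrite sum_g lee_fin sumB.
  by rewrite integral_cst // (_ : _ [set: Omega]%classic = 1) ?mule1 //; exact: probability_setT.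
by rewrite lee_fin leNgt Bc.
Qed.

End Averaging.

Local Open Scope ring_scope.

Theorem theorem8 (R : realType) (d : measure_display) (Omega : measurableType d)
    (P : probability Omega R) (A : Omega -> det_alg) :
  (forall w, det_alg_valid (A w)) ->
  (forall I, valid_instance I ->
     measurable_fun setT (fun w => ((alg_value (A w) I)%:R : R))) ->
  forall eps : R, 0 < eps ->
  exists I : instance, exists k : nat,
    [/\ valid_instance I, max_matching_size I k, (0 < k)%N &
     (\int[P]_w ((alg_value (A w) I)%:R : R)%:E
        <= ((53 / 54 + eps) * k%:R)%:E)%E].
Proof.
move=> A_ok A_meas eps eps_gt0.
pose value t w : R := (alg_value (A w) (hard_instance t))%:R.
have [[[j c] p] jcp small] : exists2 t, t \in hard_triples &
    (\int[P]_w (value t w)%:E < ((53 / 54 + eps) * 3%:R)%:E)%E.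
  apply: (@exists_integral_lt _ _ _ _ _ _ _ 35%:R).
  - by move=> [[j c] p] jcp; apply: A_meas; exact: valid_hard_instance.
  - by move=> t w; exact: ler0n.
  - by move=> w; rewrite -natr_sum ler_nat -ltnS; exact: sum_hard_values_lt.
  - by rewrite [size _]/=; lra.
exists (hard_instance (j, c, p)), 3%N; split => //.
- exact: valid_hard_instance.
- exact: max_matching_hard_instance.
- exact: ltW.
Qed.
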